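(* Let $m\ge 2$. Let $H_1$ be the graph with vertices $v_1,\dots,v_5$ and edges $v_1v_2,v_2v_3,v_3v_4,v_4v_5,v_5v_1,v_2v_4,v_3v_5$ (it has exactly one vertex of degree $2$, namely $v_1$), and let $H_2$ be the graph with vertices $v_1,\dots,v_6$ and edges $v_1v_2,v_2v_3,v_3v_4,v_4v_5,v_5v_6,v_6v_1,v_2v_5,v_3v_6$ (it has exactly two vertices of degree $2$, namely $v_1,v_4$). Let $G$ be the cubic graph constructed from the path $P_m$ by replacing each leaf with a copy of $H_1$ and each internal vertex with a copy of $H_2$, where each edge $uv$ of $P_m$ is replaced by an edge joining a degree-$2$ vertex of the copy for $u$ to a degree-$2$ vertex of the copy for $v$, each degree-$2$ vertex being used exactly once. Then (a) $G$ is a bridged, Class $2$ cubic graph with triangles, and (b) $c_2(G)-\left\lceil\frac{|V(G)|+2}{4}\right\rceil=\left\lfloor\frac{m}{2}\right\rfloor$.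
   Context: A graph is bridged if it has a bridge (an edge whose removal increases the number of components). A graph of maximum degree $\Delta$ is Class $1$ if its chromatic index is $\Delta$ and Class $2$ if it is $\Delta+1$. For a graph $G=(V,E)$ and $S_0\subseteq V$, the irreversible $2$-threshold conversion process sets, for $t=1,2,\dots$, $S_t=S_{t-1}\cup\{v: v \text{ has at least } 2 \text{ neighbours in } S_{t-1}\}$; $S_0$ is a $2$-conversion set if $S_t=V$ for some $t$, and $c_2(G)$ is the minimum size of a $2$-conversion set. *)

From HB Require Import structures.
From mathcomp Require Import all_boot all_order all_algebra.
Set Implicit Arguments. Unset Strict Implicit. Unset Printing Implicit Defensive.

Section Graphs.
Variable T : finType.
Variable e : rel T.

Definition simple_graph : Prop := symmetric e /\ irreflexive e.

Definition deg (x : T) : nat := #|[set y | e x y]|.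

Definition maxdeg : nat := \max_(x : T) deg x.

Definition cubic : Prop := forall x, deg x = 3.

Definition has_triangle : Prop := exists x y z, [&& e x y, e y z & e z x].

Definition ncomp (f : rel T) : nat := n_comp (connect f) (fun _ => true).

Definition remove_edge (x y : T) : rel T :=
  fun u v => e u v && ~~ (((u == x) && (v == y)) || ((u == y) && (v == x))).

Definition is_bridge (x y : T) : Prop :=
  e x y /\ ncomp e < ncomp (remove_edge x y).

Definition bridged : Prop := exists x y, is_bridge x y.

Definition edge_colouring (k : nat) (c : T -> T -> 'I_k) : Prop :=
  (forall x y, e x y -> c x y = c y x) /\
  (forall x y z, e x y -> e x z -> y != z -> c x y != c x z).

Definition edge_colourable (k : nat) : Prop := exists c, @edge_colouring k c.

Definition is_chromatic_index (k : nat) : Prop :=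
  edge_colourable k /\ forall j, edge_colourable j -> k <= j.

Definition class1 : Prop := is_chromatic_index maxdeg.
Definition class2 : Prop := is_chromatic_index maxdeg.+1.

Definition conv_step (S : {set T}) : {set T} :=
  S :|: [set v | 2 <= #|[set u in S | e v u]|].

Definition conv_set (S0 : {set T}) : Prop := exists t, iter t conv_step S0 = setT.

Definition is_c2 (k : nat) : Prop :=
  (exists S0 : {set T}, conv_set S0 /\ #|S0| = k) /\
  (forall S0 : {set T}, conv_set S0 -> k <= #|S0|).

End Graphs.

Unset Implicit Arguments.

(* H1 on vertices 0..4 (v1..v5), H2 on vertices 0..5 (v1..v6) *)
Definition H1_edges : seq (nat * nat) :=
  [:: (0,1); (1,2); (2,3); (3,4); (4,0); (1,3); (2,4)]%N.
Definition H2_edges : seq (nat * nat) :=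
  [:: (0,1); (1,2); (2,3); (3,4); (4,5); (5,0); (1,4); (2,5)]%N.

Definition in_edges (s : seq (nat * nat)) (a b : nat) : bool :=
  ((a, b) \in s) || ((b, a) \in s).

Definition path_internal (m i : nat) : bool := (0 < i) && (i < m.-1).

(* copy of vertex i: H2 if internal, H1 if a leaf;  vertex (i, a) = v_{a+1} of that copy *)
Definition Gvalid (m : nat) (p : 'I_m * 'I_6) : bool := path_internal m p.1 || (p.2 < 5).

Definition GV (m : nat) := {p : 'I_m * 'I_6 | Gvalid m p}.
HB.instance Definition _ (m : nat) := Finite.on (GV m).

(* degree-2 vertex of copy i used for the path edge i(i+1):
   v1 (index 0) for a leaf, v4 (index 3) for an internal vertex;
   the path edge i(i+1) lands on v1 (index 0) of copy i+1. *)
Definition port (m i : nat) : nat := if path_internal m i then 3 else 0.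

Definition pedge (m : nat) (p q : 'I_m * 'I_6) : bool :=
  [|| (p.1 == q.1) &&
        (if path_internal m p.1 then in_edges H2_edges p.2 q.2 else in_edges H1_edges p.2 q.2),
      [&& q.1 == p.1.+1 :> nat, p.2 == port m p.1 :> nat & q.2 == 0 :> nat]
    | [&& p.1 == q.1.+1 :> nat, q.2 == port m q.1 :> nat & p.2 == 0 :> nat]].

Definition Gadj (m : nat) : rel (GV m) := fun x y => pedge m (val x) (val y).

Definition ceil_div (a b : nat) : nat := (a + b.-1) %/ b.

From HB Require Import structures.
From mathcomp Require Import all_boot all_order all_algebra zify.

Set Implicit Arguments. Unset Strict Implicit. Unset Printing Implicit Defensive.

Import GRing.Theory.

(* Each copy of H1 or H2 meets the rest of G only at its degree-2 vertices, each of which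
   has exactly one neighbour outside the copy.  If a 2-conversion set met some copy in at most
   one vertex, the process would stall inside that copy even with every outside vertex
   infected (a finite check on H1 and H2); hence c_2(G) >= 2m.  Conversely v2 and v4 of every
   copy convert G, so c_2(G) = 2m, and as |V(G)| = 6m - 2 the excess over
   ceil((|V(G)| + 2) / 4) = ceil(3m / 2) is floor(m / 2).

   The edge leaving the first leaf copy is a bridge.  In a 3-edge-colouring of a cubic graph
   every colour class is a perfect matching, so each colour would occur on an edge leaving
   that 5-vertex copy, which has only one such edge: G is Class 2.  A 4-edge-colouring gives
   colour 3 to the path edges and colours each copy by hand. *)

(** * Edge colourings of cubic graphs *)

Lemma odd_card_fixfree_involution (T : finType) (g : T -> T) (B : {set T}) :
  involutive g -> (forall x, x \in B -> g x \in B /\ g x != x) -> ~~ odd #|B|.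
Proof.
move=> gK; have [n ltBn] := ubnP #|B|; elim: n B ltBn => // n IH B ltBn Bg.
have [-> | [x xB]] := set_0Vmem B; first by rewrite cards0.
have [gxB gxx] := Bg x xB.
have pairB : [set x; g x] \subset B by rewrite subUset !sub1set xB gxB.
have cardB : #|B| = #|B :\: [set x; g x]| + 2.
  by rewrite -(cardsID [set x; g x] B) (setIidPr pairB) cards2 eq_sym gxx addnC.
rewrite cardB oddD addbF IH //; first by rewrite cardB in ltBn; lia.
move=> y; rewrite !inE negb_or => /andP [/andP [nyx nygx] yB].
have [gyB gyy] := Bg y yB; split=> //.
by rewrite gyB (inv_eq gK) (inj_eq (inv_inj gK)) negb_or nygx nyx.
Qed.

Section ThreeEdgeColouring.
Variables (T : finType) (e : rel T) (c : T -> T -> 'I_3).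
Hypotheses (e_sym : symmetric e) (e_cubic : cubic e) (c_col : edge_colouring e c).

Lemma colour_at x k : exists2 y, e x y & c x y = k.
Proof.
have [_ c_proper] := c_col.
have c_inj : {in [set y | e x y] &, injective (c x)}.
  move=> y z; rewrite !inE => xy xz; apply: contra_eq; exact: c_proper.
have : c x @: [set y | e x y] = [set: 'I_3].
  by apply/eqP; rewrite eqEcard subsetT cardsT card_ord card_in_imset // -/(deg e x) e_cubic.
by move/setP/(_ k); rewrite inE => /imsetP [y]; rewrite inE => xy ->; exists y.
Qed.

Definition partner k x := odflt x [pick y | e x y && (c x y == k)].

Lemma partnerP k x : e x (partner k x) /\ c x (partner k x) = k.
Proof.
rewrite /partner; case: pickP => [y /andP [xy /eqP] | none] //=.
by have [y xy cy] := colour_at x k; have := none y; rewrite xy cy eqxx.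
Qed.

Lemma partner_eq k x y : e x y -> c x y = k -> partner k x = y.
Proof.
have [_ c_proper] := c_col; have [xp cp] := partnerP k x => xy cy.
by apply: contraTeq isT => /(c_proper _ _ _ xp xy); rewrite cp cy eqxx.
Qed.

Lemma partnerK k : involutive (partner k).
Proof.
have [c_sym _] := c_col; move=> x; have [xp cp] := partnerP k x.
by apply: partner_eq; rewrite 1?e_sym // -c_sym.
Qed.

End ThreeEdgeColouring.

Definition single_edge_cut (T : finType) (e : rel T) (A : {set T}) (x y : T) : Prop :=
  forall u v, u \in A -> v \notin A -> e u v -> u = x /\ v = y.

(* [partner e c k] is a fixed-point-free involution: the k-coloured edges form a perfect
   matching, so those inside an odd set A cannot cover it. *)
Theorem odd_single_edge_cut_not_3_edge_colourable (T : finType) (e : rel T) (A : {set T}) x y :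
  simple_graph e -> cubic e -> odd #|A| -> single_edge_cut e A x y -> ~ edge_colourable e 3.
Proof.
move=> [e_sym e_irr] e_cubic oddA cutA [c c_col].
have cut_colour k : c x y = k.
  pose B := [set u in A | partner e c k u \in A].
  have evenB : ~~ odd #|B|.
    apply: (odd_card_fixfree_involution (partnerK e_sym e_cubic c_col k)) => u.
    rewrite !inE => /andP [uA puA]; rewrite puA (partnerK e_sym e_cubic c_col) uA; split=> //.
    have [up _] := partnerP e_cubic c_col k u.
    by apply: contraTneq up => ->; rewrite e_irr.
  have [AB0 | [u]] := set_0Vmem (A :\: B).
    have BA : B \subset A by apply/subsetP => u; rewrite inE => /andP [].
    by move: oddA; rewrite -(cardsID B A) AB0 cards0 addn0 (setIidPr BA) (negbTE evenB).
  rewrite !inE => /andP [uB uA]; rewrite uA /= in uB.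
  have [up cp] := partnerP e_cubic c_col k u.
  by have [<- <-] := cutA _ _ uA uB up.
by move: (cut_colour ord0) (cut_colour ord_max) => -> /(congr1 val).
Qed.

Lemma edge_colourable_widen (T : finType) (e : rel T) j k :
  j <= k -> edge_colourable e j -> edge_colourable e k.
Proof.
move=> le_jk [c [c_sym c_proper]]; exists (fun x y => widen_ord le_jk (c x y)); split.
  by move=> x y xy; rewrite c_sym.
by move=> x y z xy xz nyz; rewrite -(inj_eq val_inj) /=; apply: c_proper.
Qed.

Lemma maxdeg_cubic (T : finType) (e : rel T) (x0 : T) : cubic e -> maxdeg e = 3.
Proof.
move=> e_cubic; apply/eqP; rewrite eqn_leq -{2}(e_cubic x0) leq_bigmax andbT.
by apply/bigmax_leqP => x _; rewrite e_cubic.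
Qed.

Lemma class2_of_odd_single_edge_cut (T : finType) (e : rel T) (A : {set T}) x y :
  simple_graph e -> cubic e -> odd #|A| -> single_edge_cut e A x y ->
  edge_colourable e 4 -> class2 e.
Proof.
move=> e_simple e_cubic oddA cutA col4; rewrite /class2 (maxdeg_cubic x e_cubic).
split=> // j colj; rewrite ltnNge; apply/negP => le_j3.
exact: (odd_single_edge_cut_not_3_edge_colourable e_simple e_cubic oddA cutA
          (edge_colourable_widen le_j3 colj)).
Qed.

(** * Bridges *)

Section Components.
Variables (T : finType) (e : rel T).
Hypothesis e_sym : symmetric e.

Lemma connect_connect : connect (connect e) =2 connect e.
Proof.
move=> x y; apply/idP/idP; last exact: connect1.
by apply: connect_sub => u v; apply: connect_trans.
Qed.

Lemma connect_connect_sym : connect_sym (connect e).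
Proof. by move=> x y; rewrite !connect_connect; apply: sym_connect_sym. Qed.

Lemma ncomp_connected x0 : (forall x, connect e x0 x) -> ncomp e = 1.
Proof.
move=> conn; rewrite /ncomp -(n_comp_connect connect_connect_sym x0).
by apply: eq_n_comp_r => z; rewrite !inE connect1.
Qed.

Lemma ncomp_disconnected x y : ~~ connect e x y -> 1 < ncomp e.
Proof.
move=> nxy; rewrite /ncomp; have := n_comp_closure2 connect_connect_sym x y.
rewrite connect_connect nxy => <-.
by apply: subset_leq_card; apply/subsetP => z; rewrite !inE => /andP [-> _].
Qed.

End Components.

Lemma single_edge_cut_bridge (T : finType) (e : rel T) (A : {set T}) x0 x y :
  symmetric e -> (forall z, connect e x0 z) -> e x y -> x \in A -> y \notin A ->
  single_edge_cut e A x y -> is_bridge e x y.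
Proof.
move=> e_sym conn xy xA yA cutA; split=> //.
rewrite (ncomp_connected e_sym conn).
have e'_sym : symmetric (remove_edge e x y).
  move=> u v; rewrite /remove_edge e_sym; congr (_ && ~~ _).
  by case: (u == x); case: (u == y); case: (v == x); case: (v == y).
apply: (ncomp_disconnected e'_sym (x := x) (y := y)).
suff closedA : closed (remove_edge e x y) A.
  by apply/negP => /(closed_connect closedA); rewrite xA (negbTE yA).
move=> u v /andP [uv]; rewrite negb_or.
case: (boolP (u \in A)) => uA; case: (boolP (v \in A)) => vA //= /andP [].
  by have [-> ->] := cutA u v uA vA uv; rewrite !eqxx.
by have [-> ->] := cutA v u vA uA (etrans (e_sym v u) uv); rewrite !eqxx.
Qed.

(** * The gadgets H1 and H2 *)

(* The gadget of kind [k] is H2 if [k] and H1 otherwise, on labels 0..5 (label 5 is unused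
   in H1); its ports are the degree-2 vertices, which carry the path edges. *)
Definition gadget_edges (k : bool) : seq (nat * nat) := if k then H2_edges else H1_edges.
Definition gadget_adj (k : bool) (a b : 'I_6) : bool := in_edges (gadget_edges k) a b.
Definition gadget_vertex (k : bool) (a : 'I_6) : bool := k || (a < 5).
Definition gadget_port (k : bool) (a : 'I_6) : bool := (a == 0 :> nat) || k && (a == 3 :> nat).

(* Unlike [enum 'I_6], this enumeration reduces under [vm_compute]. *)
Definition labels : seq 'I_6 :=
  [:: @Ordinal 6 0 isT; @Ordinal 6 1 isT; @Ordinal 6 2 isT;
      @Ordinal 6 3 isT; @Ordinal 6 4 isT; @Ordinal 6 5 isT].

Lemma mem_labels a : a \in labels.
Proof. by case: a => [[|[|[|[|[|[|?]]]]]] ?]. Qed.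

Lemma labelsP (P : pred 'I_6) : reflect (forall a, P a) (all P labels).
Proof. by apply: (iffP allP) => P_all a; rewrite ?P_all ?mem_labels. Qed.

Lemma labels2P (P : 'I_6 -> 'I_6 -> bool) :
  reflect (forall a b, P a b) (all (fun a => all (P a) labels) labels).
Proof. by apply: (iffP (labelsP _)) => P_all a; apply/labelsP. Qed.

Lemma labels3P (P : 'I_6 -> 'I_6 -> 'I_6 -> bool) :
  reflect (forall a b c, P a b c) (all (fun a => all (fun b => all (P a b) labels) labels) labels).
Proof. by apply: (iffP (labelsP _)) => P_all a; apply/labels2P. Qed.

Lemma card_labels (P : pred 'I_6) : #|[set a | P a]| = count P labels.
Proof.
rewrite -size_filter -(card_uniqP (filter_uniq P (isT : uniq labels))).
by apply: eq_card => a; rewrite inE mem_filter mem_labels andbT.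
Qed.

Lemma gadget_adj_sym k : symmetric (gadget_adj k).
Proof. by move=> a b; rewrite /gadget_adj /in_edges orbC. Qed.

Lemma gadget_adj_irr k a : ~~ gadget_adj k a a.
Proof. by case: k; move: a; apply/labelsP; vm_compute. Qed.

Lemma gadget_adj_vertex k a b : gadget_adj k a b ==> gadget_vertex k b.
Proof. by case: k; move: a b; apply/labels2P; vm_compute. Qed.

Lemma gadget_degree k a :
  gadget_vertex k a ==> (count (gadget_adj k a) labels + gadget_port k a == 3).
Proof. by case: k; move: a; apply/labelsP; vm_compute. Qed.

Lemma gadget_descent k b :
  gadget_vertex k b ==> (b == 0 :> nat) || has (fun a : 'I_6 => (a < b) && gadget_adj k a b) labels.
Proof. by case: k; move: b; apply/labelsP; vm_compute. Qed.

(* The [let] makes the VM compute the table once, so that iterating [gadget_step] stays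
   cheap. *)
Definition tabulate (f : 'I_6 -> bool) : 'I_6 -> bool :=
  let table := [seq f a | a <- labels] in fun a => nth false table a.

Lemma tabulateE f a : tabulate f a = f a.
Proof. by case: a => [[|[|[|[|[|[|?]]]]]] ?] //=; congr f; apply: val_inj. Qed.

(* With [ext], every port counts one extra infected neighbour, as when everything outside
   the copy is infected. *)
Definition gadget_step (k ext : bool) (A : 'I_6 -> bool) : 'I_6 -> bool :=
  tabulate (fun b => A b || gadget_vertex k b &&
    (2 <= count (fun a => A a && gadget_adj k b a) labels + (ext && gadget_port k b))).

Definition seed_labels (a : 'I_6) : bool := (a == 1 :> nat) || (a == 3 :> nat).

Lemma gadget_seeds_convert k b :
  gadget_vertex k b ==> iter 4 (gadget_step k false) seed_labels b.
Proof. by case: k; move: b; apply/labelsP; vm_compute. Qed.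

Lemma gadget_single_seed_stuck k x : exists P : 'I_6 -> bool,
  [/\ P x, forall b, gadget_step k true P b -> P b & exists2 b, gadget_vertex k b & ~~ P b].
Proof.
pose closure x := iter 6 (gadget_step k true) (pred1 x).
have : [&& closure x x, all (fun b => gadget_step k true (closure x) b ==> closure x b) labels
          & has (fun b => gadget_vertex k b && ~~ closure x b) labels].
  by case: k @closure; move: x; apply/labelsP; vm_compute.
case/and3P=> Px /allP closedP /hasP [b _ /andP [vb nPb]]; exists (closure x); split=> //.
  by move=> c; apply/implyP/closedP; rewrite mem_labels.
by exists b.
Qed.

Local Notation col n := (@Ordinal 4 n isT).

(* The i-th edge of [gadget_edges k] gets the i-th colour; colour 3 never meets a port and is
   left for the path edges. *)
Definition gadget_edge_colours (k : bool) : seq 'I_4 :=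
  if k then [:: col 0; col 1; col 0; col 1; col 0; col 1; col 2; col 2]
  else [:: col 0; col 1; col 0; col 1; col 2; col 2; col 3].

Definition gadget_colour (k : bool) (a b : 'I_6) : 'I_4 :=
  let E := gadget_edges k in
  nth ord_max (gadget_edge_colours k)
    (if (val a, val b) \in E then index (val a, val b) E else index (val b, val a) E).

Lemma gadget_colour_sym k a b : gadget_colour k a b == gadget_colour k b a.
Proof. by case: k; move: a b; apply/labels2P; vm_compute. Qed.

Lemma gadget_colour_port k a b :
  gadget_port k a ==> gadget_adj k a b ==> (gadget_colour k a b != ord_max).
Proof. by case: k; move: a b; apply/labels2P; vm_compute. Qed.

Lemma gadget_colour_proper k a b c :
  gadget_adj k a b ==> gadget_adj k a c ==> (b != c) ==>
  (gadget_colour k a b != gadget_colour k a c).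
Proof. by case: k; move: a b c; apply/labels3P; vm_compute. Qed.

(** * The graph G *)

Section PathOfGadgets.
Variable m : nat.
Hypothesis m_gt1 : 1 < m.

Local Notation V := (GV m).
Local Notation adj := (@Gadj m).
Local Notation copy u := (val u).1.
Local Notation label u := (val u).2.

Definition internal (i : 'I_m) : bool := path_internal m i.

Lemma internalE (i : 'I_m) : internal i = (0 < i) && (i.+1 < m).
Proof. by rewrite /internal /path_internal; congr (_ && _); lia. Qed.

Definition mkV (i : 'I_m) (b : 'I_6) (h : gadget_vertex (internal i) b) : V :=
  exist _ (i, b) h.

Lemma vertex_inj (u w : V) : copy u = copy w -> label u = label w -> u = w.
Proof.
move=> eq_copy eq_label; apply: val_inj.
by rewrite [val u]surjective_pairing [val w]surjective_pairing eq_copy eq_label.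
Qed.

Lemma label_vertex (u : V) : gadget_vertex (internal (copy u)) (label u).
Proof. exact: valP u. Qed.

Lemma adj_same_copy (u w : V) :
  copy u = copy w -> adj u w = gadget_adj (internal (copy u)) (label u) (label w).
Proof.
rewrite /Gadj /pedge => ->; have n_neq_Sn (n : nat) : (n == n.+1) = false by lia.
by rewrite eqxx !n_neq_Sn !andFb !orbF /gadget_adj /gadget_edges /internal; case: path_internal.
Qed.

Definition path_link (u w : V) : Prop :=
  [/\ (copy w : nat) = (copy u).+1, (label u : nat) = port m (copy u) & (label w : nat) = 0].

Lemma adj_other_copy (u w : V) :
  copy u != copy w -> adj u w <-> path_link u w \/ path_link w u.
Proof.
rewrite /Gadj /pedge => /negbTE -> /=; split.
  by case/orP => /and3P [/eqP ? /eqP ? /eqP ?]; [left | right].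
by case=> [[-> -> ->] | [-> -> ->]]; rewrite !eqxx ?orbT.
Qed.

Lemma path_link_copy u w : path_link u w -> copy u != copy w.
Proof. by case=> eq_copy _ _; apply/eqP => eq_uw; move: eq_copy; rewrite eq_uw; lia. Qed.

Lemma path_link_adj u w : path_link u w -> adj u w.
Proof. by move=> link; apply/(adj_other_copy (path_link_copy link)); left. Qed.

Lemma path_link_port u w : path_link u w ->
  gadget_port (internal (copy u)) (label u) /\ gadget_port (internal (copy w)) (label w).
Proof. by case=> _ lu lw; rewrite /gadget_port lu lw /port /internal; case: path_internal. Qed.

Lemma external_port (u w : V) :
  adj u w -> copy u != copy w -> gadget_port (internal (copy u)) (label u).
Proof. by move=> uw /adj_other_copy/iffLR/(_ uw) [] /path_link_port []. Qed.

Lemma external_unique (u w1 w2 : V) : adj u w1 -> adj u w2 ->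
  copy u != copy w1 -> copy u != copy w2 -> w1 = w2.
Proof.
move=> uw1 uw2 /adj_other_copy/iffLR/(_ uw1) link1 /adj_other_copy/iffLR/(_ uw2) link2.
have port_internal (j : 'I_m) : 0 < j -> j.+1 < m -> port m j = 3.
  by move=> ? ?; rewrite /port -/(internal j) internalE; apply/ifT/andP.
have lt_u := ltn_ord (copy u); have lt_w1 := ltn_ord (copy w1); have lt_w2 := ltn_ord (copy w2).
case: link1 => -[c1 l1 l1']; case: link2 => -[c2 l2 l2'].
- by apply: vertex_inj; apply: ord_inj; lia.
- by rewrite port_internal in l1; lia.
- by rewrite port_internal in l2; lia.
- have eq_copy : copy w1 = copy w2 by apply: ord_inj; lia.
  by apply: vertex_inj => //; apply: ord_inj; rewrite l1 l2 eq_copy.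
Qed.

Definition entry (i : 'I_m) : V := @mkV i ord0 (orbT (internal i)).

Lemma port_lt5 (i : 'I_m) : port m i < 5.
Proof. by rewrite /port; case: path_internal. Qed.

Lemma exit_vertex (i : 'I_m) : gadget_vertex (internal i) (Ordinal (leqW (port_lt5 i))).
Proof. by rewrite /gadget_vertex /= port_lt5 orbT. Qed.

Definition exit (i : 'I_m) : V := mkV (exit_vertex i).

Lemma path_link_exit_entry (i j : 'I_m) : j = i.+1 :> nat -> path_link (exit i) (entry j).
Proof. by []. Qed.

Lemma external_exists (u : V) :
  gadget_port (internal (copy u)) (label u) -> exists2 w, adj u w & copy u != copy w.
Proof.
have link_adj u' w : path_link u' w \/ path_link w u' -> exists2 w, adj u' w & copy u' != copy w.
  move=> link; have neq : copy u' != copy w by case: link => /path_link_copy; rewrite // eq_sym.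
  by exists w => //; apply/(adj_other_copy neq).
rewrite /gadget_port => /orP [/eqP lu | /andP [int_u /eqP lu]].
  case def_i : (nat_of_ord (copy u)) => [|j].
    apply: (link_adj _ (entry (Ordinal m_gt1))); left.
    by split; rewrite ?def_i ?lu // /port /path_internal def_i.
  have lt_jm : j < m by have := ltn_ord (copy u); lia.
  apply: (link_adj _ (exit (Ordinal lt_jm))); right.
  by split; rewrite ?def_i ?lu.
have lt_Sm : (copy u).+1 < m by move: int_u; rewrite internalE => /andP [].
apply: (link_adj _ (entry (Ordinal lt_Sm))); left.
by split; rewrite //= lu /port -/(internal _) int_u.
Qed.

Definition trace (i : 'I_m) (S : {set V}) : {set 'I_6} :=
  [set label w | w in [set w in S | copy w == i]].

Lemma card_trace (i : 'I_m) (S : {set V}) : #|[set w in S | copy w == i]| = #|trace i S|.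
Proof.
apply/esym/card_in_imset => w1 w2; rewrite !inE => /andP [_ /eqP c1] /andP [_ /eqP c2].
by apply: vertex_inj; rewrite c1 c2.
Qed.

Lemma card_by_copies (S : {set V}) : #|S| = \sum_(i < m) #|trace i S|.
Proof.
rewrite -sum1_card (partition_big (fun w : V => copy w) xpredT) //=.
by apply: eq_bigr => i _; rewrite -card_trace -sum1_card; apply: eq_bigl => w; rewrite !inE.
Qed.

Lemma trace_label_set (P : pred 'I_6) (i : 'I_m) :
  trace i [set u : V | P (label u)] = [set a | gadget_vertex (internal i) a && P a].
Proof.
apply/setP => a; rewrite inE; apply/imsetP/idP.
  by case=> w; rewrite !inE => /andP [Pw /eqP <-] ->; rewrite Pw label_vertex.
by case/andP => va Pa; exists (mkV va); rewrite // !inE /= Pa eqxx.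
Qed.

Lemma trace_setT (i : 'I_m) : trace i [set: V] = [set a | gadget_vertex (internal i) a].
Proof.
apply/setP => a; have /setP/(_ a) := trace_label_set xpredT i; rewrite !inE andbT => <-.
by congr (a \in trace i _); apply/setP => w; rewrite !inE.
Qed.

Lemma card_local_nbrs (u : V) (S : {set V}) :
  #|[set w in S | adj u w & copy w == copy u]| =
  #|[set a in trace (copy u) S | gadget_adj (internal (copy u)) (label u) a]|.
Proof.
rewrite -(@card_in_imset _ _ (fun w : V => label w)); last first.
  move=> w1 w2; rewrite !inE => /and3P [_ _ /eqP c1] /and3P [_ _ /eqP c2] l12.
  by apply: vertex_inj; rewrite // c1 c2.
apply: eq_card => a; apply/imsetP/idP.
  case=> w; rewrite !inE => /and3P [wS uw /eqP cw] ->.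
  rewrite (adj_same_copy (esym cw)) in uw.
  by rewrite uw andbT; apply/imsetP; exists w; rewrite // inE wS cw eqxx.
rewrite !inE => /andP [/imsetP [w + ->] ua]; rewrite inE => /andP [wS /eqP cw].
by exists w; rewrite // !inE wS cw eqxx andbT adj_same_copy.
Qed.

Lemma card_nbrs (u : V) (S : {set V}) :
  #|[set w in S | adj u w]| =
  #|[set a in trace (copy u) S | gadget_adj (internal (copy u)) (label u) a]| +
  #|[set w in S | adj u w & copy w != copy u]|.
Proof.
rewrite -card_local_nbrs -(cardsID [set w | copy w == copy u] [set w in S | adj u w]).
by congr (_ + _); apply: eq_card => w; rewrite !inE; [rewrite andbA | rewrite andbC andbA].
Qed.

Lemma card_external_nbrs_le (u : V) (S : {set V}) :
  #|[set w in S | adj u w & copy w != copy u]| <= gadget_port (internal (copy u)) (label u).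
Proof.
have [-> | [w0]] := set_0Vmem [set w in S | adj u w & copy w != copy u].
  by rewrite cards0.
rewrite inE => /and3P [_ uw0 n0]; rewrite eq_sym in n0.
rewrite (external_port uw0 n0); apply: (@leq_trans #|[set w0]|); last by rewrite cards1.
apply/subset_leq_card/subsetP => w.
by rewrite !inE eq_sym => /and3P [_ uw n]; apply/eqP; apply: (external_unique uw uw0).
Qed.

Lemma card_external_nbrs (u : V) :
  #|[set w in [set: V] | adj u w & copy w != copy u]| =
  gadget_port (internal (copy u)) (label u).
Proof.
apply/eqP; rewrite eqn_leq card_external_nbrs_le /=.
case port_u : gadget_port => //; have [w uw n] := external_exists port_u.
by apply/card_gt0P; exists w; rewrite !inE uw eq_sym n.
Qed.

Lemma simple_G : simple_graph adj.
Proof.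
split.
  move=> x y; rewrite /Gadj /pedge; congr (_ || _); last by rewrite orbC.
  by rewrite eq_sym; case: eqP => //= ->; case: path_internal; rewrite /in_edges orbC.
move=> x; have n_neq_Sn (n : nat) : (n == n.+1) = false by lia.
rewrite /Gadj /pedge eqxx !n_neq_Sn /= !orbF.
have := gadget_adj_irr (internal (copy x)) (label x).
by rewrite /gadget_adj /gadget_edges /internal; case: path_internal => /negbTE.
Qed.

Lemma cubic_G : cubic adj.
Proof.
move=> u; set k := internal (copy u).
have nbrs_in_copy : [set a in trace (copy u) [set: V] | gadget_adj k (label u) a] =
                    [set a | gadget_adj k (label u) a].
  apply/setP => a; rewrite !inE trace_setT inE andb_idl //.
  exact: (implyP (gadget_adj_vertex _ _ _)).
have := implyP (gadget_degree k (label u)) (label_vertex u).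
rewrite -card_labels -nbrs_in_copy -card_external_nbrs -card_nbrs => /eqP <-.
by apply: eq_card => w; rewrite !inE.
Qed.

Definition first_copy : 'I_m := Ordinal (ltnW m_gt1).
Definition second_copy : 'I_m := Ordinal m_gt1.

Lemma triangle_G : has_triangle adj.
Proof.
have v (b : 'I_6) : b < 5 -> gadget_vertex (internal first_copy) b.
  by move=> lt_b5; rewrite /gadget_vertex lt_b5 orbT.
by exists (mkV (v (@Ordinal 6 1 isT) isT)), (mkV (v (@Ordinal 6 2 isT) isT)),
          (mkV (v (@Ordinal 6 3 isT) isT)).
Qed.

Lemma connect_entry (u : V) : connect adj (entry (copy u)) u.
Proof.
have [n lt_un] := ubnP (label u); elim: n u lt_un => // n IH u lt_un.
have /implyP/(_ (label_vertex u))/orP [/eqP lu0 | /hasP [a _ /andP [lt_au au]]] :=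
  gadget_descent (internal (copy u)) (label u).
  by apply/eq_connect0/vertex_inj => //; apply: ord_inj; rewrite lu0.
have va : gadget_vertex (internal (copy u)) a.
  by apply: (implyP (gadget_adj_vertex _ (label u) _)); rewrite gadget_adj_sym.
apply: connect_trans (IH (mkV va) _) (connect1 _); first by rewrite /=; lia.
by rewrite adj_same_copy.
Qed.

Lemma connect_first_entry (u : V) : connect adj (entry first_copy) u.
Proof.
apply: connect_trans (connect_entry u); case: (copy u) => j lt_jm.
elim: j lt_jm => [|j IH] lt_jm; first by apply/eq_connect0; congr entry; apply: ord_inj.
have lt_j : j < m by apply: ltnW.
apply: connect_trans (IH lt_j) (connect_trans (connect_entry (exit (Ordinal lt_j))) (connect1 _)).
exact/path_link_adj/path_link_exit_entry.
Qed.

Definition leaf_copy : {set V} := [set u | copy u == first_copy].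

Lemma card_leaf_copy : #|leaf_copy| = 5.
Proof.
rewrite (eq_card (B := [set u in [set: V] | copy u == first_copy])) ?card_trace; last first.
  by move=> u; rewrite !inE.
by rewrite trace_setT card_labels /internal /path_internal.
Qed.

Lemma leaf_copy_cut : single_edge_cut adj leaf_copy (entry first_copy) (entry second_copy).
Proof.
move=> u w; rewrite !inE => /eqP cu cw; have neq : copy u != copy w by rewrite cu eq_sym.
case/(adj_other_copy neq) => -[c l l']; last by move: c; rewrite cu.
have port0 : port m first_copy = 0 by rewrite /port /path_internal.
by split; apply: vertex_inj; apply: ord_inj; rewrite /= ?c ?l ?l' ?cu.
Qed.

Lemma bridged_G : bridged adj.
Proof.
have [adj_sym _] := simple_G.
exists (entry first_copy), (entry second_copy).
by apply: (single_edge_cut_bridge adj_sym connect_first_entry _ _ _ leaf_copy_cut); rewrite ?inE.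
Qed.

Definition colour (x y : V) : 'I_4 :=
  if copy x == copy y then gadget_colour (internal (copy x)) (label x) (label y) else ord_max.

Lemma colour_proper : edge_colouring adj colour.
Proof.
split=> [x y _ | x y z xy xz nyz]; rewrite /colour.
  by rewrite eq_sym; case: eqP => // eq_yx; rewrite eq_yx; apply/eqP/gadget_colour_sym.
have local w : copy x = copy w -> adj x w -> gadget_adj (internal (copy x)) (label x) (label w).
  by move=> cw; rewrite adj_same_copy.
case: (eqVneq (copy x) (copy y)) => [cy | ncy]; case: (eqVneq (copy x) (copy z)) => [cz | ncz].
- have nyz' : label y != label z.
    by apply: contra_neq nyz => lyz; apply: vertex_inj; rewrite // -cy -cz.
  have := gadget_colour_proper (internal (copy x)) (label x) (label y) (label z).
  by rewrite (local y cy xy) (local z cz xz) nyz'.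
- have := gadget_colour_port (internal (copy x)) (label x) (label y).
  by rewrite (external_port xz ncz) (local y cy xy).
- have := gadget_colour_port (internal (copy x)) (label x) (label z).
  by rewrite (external_port xy ncy) (local z cz xz) eq_sym.
- by case/eqP: nyz; apply: external_unique xy xz ncy ncz.
Qed.

Lemma class2_G : class2 adj.
Proof.
apply: (class2_of_odd_single_edge_cut simple_G cubic_G _ leaf_copy_cut).
  by rewrite card_leaf_copy.
by exists colour; apply: colour_proper.
Qed.

Lemma sum_internal : \sum_(i < m) internal i = m - 2.
Proof.
rewrite -(big_mkord xpredT (fun i => nat_of_bool (path_internal m i))).
case: m m_gt1 => [|[|n]] // _.
rewrite big_ltn // big_nat_recr //= (eq_big_nat _ _ (F2 := fun _ => 1)); last first.
  by move=> i /andP [lt0i lt_in]; rewrite /path_internal lt0i /=; lia.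
by rewrite sum_nat_const_nat /path_internal ltnn /=; lia.
Qed.

Lemma card_G : #|[set: V]| = 6 * m - 2.
Proof.
rewrite card_by_copies (eq_bigr (fun i => 5 + internal i)) => [|i _]; last first.
  by rewrite trace_setT card_labels /internal; case: path_internal.
by rewrite big_split sum_nat_const card_ord sum_internal /=; lia.
Qed.

Definition seeds : {set V} := [set u | seed_labels (label u)].

Lemma card_seeds : #|seeds| = 2 * m.
Proof.
rewrite card_by_copies (eq_bigr (fun=> 2)) => [|i _].
  by rewrite sum_nat_const card_ord mulnC.
by rewrite trace_label_set card_labels /internal; case: path_internal.
Qed.

Lemma iter_conv_step_seeds n (u : V) :
  iter n (gadget_step (internal (copy u)) false) seed_labels (label u) ->
  u \in iter n (conv_step adj) seeds.
Proof.
elim: n u => [|n IH] u /=; first by rewrite inE.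
rewrite /gadget_step tabulateE => /orP [/IH uS | /andP [_]]; first by rewrite inE uS.
rewrite addn0 inE => two_nbrs; apply/orP; right; rewrite inE.
apply: leq_trans two_nbrs _; rewrite card_nbrs -card_labels; apply: leq_trans (leq_addr _ _).
apply/subset_leq_card/subsetP => a; rewrite !inE => /andP [conv_a ua]; rewrite ua andbT.
have va : gadget_vertex (internal (copy u)) a := implyP (gadget_adj_vertex _ _ _) ua.
by apply/imsetP; exists (mkV va); rewrite // inE (IH (mkV va)) // eqxx.
Qed.

Lemma seeds_convert : conv_set adj seeds.
Proof.
exists 4; apply/setP => u; rewrite in_setT; apply: iter_conv_step_seeds.
exact: (implyP (gadget_seeds_convert _ _) (label_vertex u)).
Qed.

Lemma trace_invariant (i : 'I_m) (S : {set V}) (P : 'I_6 -> bool) :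
  (forall a, a \in trace i S -> P a) -> (forall b, gadget_step (internal i) true P b -> P b) ->
  forall n (u : V), copy u = i -> u \in iter n (conv_step adj) S -> P (label u).
Proof.
move=> SP P_closed; elim=> [|n IH] u cu /=.
  by move=> uS; apply: SP; apply/imsetP; exists u; rewrite // inE uS cu eqxx.
rewrite inE => /orP [/IH -> // | ]; rewrite inE => two_nbrs.
apply: P_closed; rewrite /gadget_step tabulateE -cu label_vertex andTb; apply/orP; right.
apply: leq_trans two_nbrs _; rewrite card_nbrs -card_labels.
apply: leq_add; last exact: card_external_nbrs_le.
apply/subset_leq_card/subsetP => a; rewrite !inE => /andP [/imsetP [w + ->] uw].
by rewrite inE uw andbT => /andP [wS /eqP cw]; apply: IH; rewrite // cw.
Qed.

Lemma conv_set_trace (S : {set V}) (i : 'I_m) : conv_set adj S -> 1 < #|trace i S|.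
Proof.
case=> t conv_t; rewrite ltnNge; apply/negP => /card_le1P small.
have [x only_x] : exists x, forall a, a \in trace i S -> a = x.
  have [-> | [x xS]] := set_0Vmem (trace i S); first by exists ord0 => a; rewrite inE.
  by exists x => a; rewrite (small x xS) => /eqP.
have [P [Px P_closed [b vb nPb]]] := gadget_single_seed_stuck (internal i) x.
have SP a : a \in trace i S -> P a by move/only_x ->.
have := trace_invariant SP P_closed (n := t) (u := mkV vb) erefl.
by rewrite conv_t inE (negbTE nPb) => /(_ isT).
Qed.

Lemma conv_set_lower_bound (S : {set V}) : conv_set adj S -> 2 * m <= #|S|.
Proof.
move=> convS; have : \sum_(i < m) 2 <= \sum_(i < m) #|trace i S|.
  by apply: leq_sum => i _; apply: conv_set_trace.
by rewrite sum_nat_const card_ord mulnC -card_by_copies.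
Qed.

Lemma c2_G : is_c2 adj (2 * m).
Proof.
split; last exact: conv_set_lower_bound.
by exists seeds; split; [exact: seeds_convert | exact: card_seeds].
Qed.

End PathOfGadgets.

Theorem proposition5p6 (m : nat) (hm : 2 <= m) :
  (simple_graph (@Gadj m) /\ cubic (@Gadj m) /\ bridged (@Gadj m) /\
   class2 (@Gadj m) /\ has_triangle (@Gadj m)) /\
  (exists k : nat, is_c2 (@Gadj m) k /\
     (k%:Z - (ceil_div (#|{: GV m}| + 2) 4)%:Z = (m %/ 2)%:Z)%R).
Proof.
split.
  exact: conj (simple_G hm) (conj (cubic_G hm) (conj (bridged_G hm)
           (conj (class2_G hm) (triangle_G hm)))).
exists (2 * m); split; first exact: c2_G.
have excess : 2 * m = ceil_div (#|{: GV m}| + 2) 4 + m %/ 2.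
  by rewrite -cardsT card_G // /ceil_div; lia.
by rewrite {1}excess PoszD addrC addKr.
Qed.
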